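(* Let $A,B\in\mathbb{R}[x]$. If $(A,B)$ is an interpolatory 1-cube, then $(A,B,B,xA)$ is an interpolatory square.
   Context: A polynomial is standard if it is $\equiv0$ or has positive leading coefficient. It has only nonpositive zeros if it is $\equiv0$ or all its zeros are real and $\le0$. Relation $\prec$: for $A,B$ with only real zeros, with zeros $\xi_1\le\cdots\le\xi_a$ of $A$ and $\theta_1\le\cdots\le\theta_b$ of $B$, $A\prec B$ means one of the following: - $\deg B=\deg A+1$ and $\theta_1\le\xi_1\le\theta_2\le\cdots\le\xi_a\le\theta_{a+1}$; - $\deg A=\deg B$ and $\xi_1\le\theta_1\le\cdots\le\xi_a\le\theta_a$. By convention $A\prec0$ and $0\prec A$. An interpolatory 1-cube is a pair $(A,B)$ of standard polynomials with only nonpositive zeros and $A\prec B$. A quadruple $(A,B,P,Q)$ is an interpolatory square if, for all $\lambda,\rho>0$, both $(\lambda A+\rho B,\lambda P+\rho Q)$ and $(\lambda B+\rho xA,\lambda Q+\rho xP)$ are interpolatory 1-cubes. *)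

From HB Require Import structures.
From mathcomp Require Import all_boot all_order all_algebra.
From mathcomp Require Import reals.
Set Implicit Arguments. Unset Strict Implicit. Unset Printing Implicit Defensive.
Import Order.TTheory GRing.Theory Num.Theory.
Local Open Scope ring_scope.

Section Defs.
Variable R : realType.

Definition standard (p : {poly R}) : Prop := p = 0 \/ 0 < lead_coef p.

Definition real_zeros (p : {poly R}) (s : seq R) : Prop :=
  p != 0 /\ sorted <=%R s /\
  p = lead_coef p *: \prod_(x <- s) ('X - x%:P).

Definition only_real_zeros (p : {poly R}) : Prop :=
  p = 0 \/ exists s, real_zeros p s.

Definition only_nonpos_zeros (p : {poly R}) : Prop :=
  p = 0 \/ exists s, real_zeros p s /\ all (fun x => x <= 0) s.

Definition interlace_seq (xi theta : seq R) : Prop :=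
  (size theta = (size xi).+1 /\
     forall i, (i < size xi)%N ->
       theta`_i <= xi`_i /\ xi`_i <= theta`_i.+1)
  \/
  (size theta = size xi /\
     forall i, (i < size xi)%N ->
       xi`_i <= theta`_i /\ ((i.+1 < size xi)%N -> theta`_i <= xi`_i.+1)).

Definition prec (A B : {poly R}) : Prop :=
  A = 0 \/ B = 0 \/
  exists xi theta, real_zeros A xi /\ real_zeros B theta /\ interlace_seq xi theta.

Definition interp_cube1 (A B : {poly R}) : Prop :=
  standard A /\ standard B /\ only_nonpos_zeros A /\ only_nonpos_zeros B /\ prec A B.

Definition interp_square (A B P Q : {poly R}) : Prop :=
  forall l r : R, 0 < l -> 0 < r ->
    interp_cube1 (l *: A + r *: B) (l *: P + r *: Q) /\
    interp_cube1 (l *: B + r *: ('X * A)) (l *: Q + r *: ('X * P)).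

End Defs.

(* Write xi ≺ theta in counting form: for every t, theta has as many zeros above t as xi,
   or one more (for both "above" and "at or above").  Two facts give the theorem.

   Cone property: if P1 ≺ G and P2 ≺ G, then every positive combination l P1 + r P2 has only
   real zeros and l P1 + r P2 ≺ G.  After factoring out the zeros common to P1, P2 and G,
   the zeros of G are simple, and at each of them l P1 + r P2 has strictly the sign that the
   number of zeros of G above it prescribes.  The intermediate value theorem then puts a zero
   between any two consecutive zeros of G, and the sign at the smallest zero of G places the
   remaining one, if any.

   Shift: for sequences of nonpositive zeros, A ≺ B iff B ≺ xA.

   For C = l A + r B and D = l B + r xA: C ≺ B by the cone property (A ≺ B, B ≺ B), so the
   zeros of C are nonpositive.  From A ≺ xA and B ≺ xA we get C ≺ xA, i.e. A ≺ C.  Then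
   B ≺ xC and xA ≺ xC give D ≺ xC, i.e. C ≺ D. *)

From mathcomp Require Import all_boot all_order all_algebra.
From mathcomp Require Import reals polyrcf.
From mathcomp Require Import zify ring lra.
Import Order.TTheory GRing.Theory Num.Theory.
Local Open Scope ring_scope.
Set Implicit Arguments. Unset Strict Implicit. Unset Printing Implicit Defensive.

Lemma count_drop (T : Type) (P : pred T) (s : seq T) k :
  (count P (drop k s) <= count P s)%N.
Proof. by rewrite -{2}(cat_take_drop k s) count_cat leq_addl. Qed.

Lemma count_take_drop (T : Type) (P : pred T) (s : seq T) k :
  (count P (take k s) <= count P s <= count P (take k s) + (size s - k))%N.
Proof.
rewrite -{2 3}(cat_take_drop k s) count_cat -size_drop.
by have := count_size P (drop k s); lia.
Qed.

Lemma exists_seq_nth (T : Type) (x0 : T) (P : nat -> T -> Prop) k :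
  (forall i, (i < k)%N -> exists y, P i y) ->
  exists2 s : seq T, size s = k & forall i, (i < size s)%N -> P i (nth x0 s i).
Proof.
elim: k => [|k ih] exP; first by exists [::].
have [s sz Ps] := ih (fun i lt_ik => exP i (ltnW lt_ik)).
have [y Py] := exP k (ltnSn k).
exists (rcons s y) => [|i]; first by rewrite size_rcons sz.
rewrite size_rcons ltnS leq_eqVlt nth_rcons sz => /predU1P[->|lt_ik]; first by rewrite ltnn eqxx.
by rewrite lt_ik; apply: Ps; rewrite sz.
Qed.

Lemma size2_polyE (F : fieldType) (q : {poly F}) : size q = 2%N ->
  q = lead_coef q *: ('X - (- q`_0 / lead_coef q)%:P).
Proof.
move=> sz2; have lc0 : lead_coef q != 0 by rewrite lead_coef_eq0 -size_poly_gt0 sz2.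
apply/polyP => -[|[|i]]; rewrite coefZ coefB coefX coefC /=.
- by rewrite sub0r mulNr opprK mulrCA divff ?mulr1.
- by rewrite subr0 mulr1 /lead_coef sz2.
by rewrite subr0 mulr0 nth_default ?sz2.
Qed.

Lemma lead_coefD_gt0 (R : numDomainType) (P Q : {poly R}) :
  0 < lead_coef P -> 0 < lead_coef Q ->
  0 < lead_coef (P + Q) /\ size (P + Q) = maxn (size P) (size Q).
Proof.
move=> lcP lcQ; case: (ltngtP (size P) (size Q)) => szPQ.
- by rewrite addrC lead_coefDl ?size_polyDl.
- by rewrite lead_coefDl ?size_polyDl.
have P0 : P != 0 by rewrite -lead_coef_eq0 gt_eqF.
have coef_top : (P + Q)`_(size P).-1 = lead_coef P + lead_coef Q.
  by rewrite coefD /lead_coef szPQ.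
have szD : size (P + Q) = size P.
  apply/anti_leq/andP; split; first by rewrite (leq_trans (size_polyD _ _)) // -szPQ maxnn.
  rewrite (polySpred P0) ltnNge; apply/negP => /leq_sizeP/(_ _ (leqnn _)).
  by rewrite coef_top => /eqP; rewrite gt_eqF // addr_gt0.
by rewrite /lead_coef szD coef_top addr_gt0.
Qed.

Section Interlacing.
Variable R : realType.
Implicit Types (s x y : seq R) (t : R) (P : pred R).

Definition count_gt s t := count (fun z => t < z) s.
Definition count_ge s t := count (fun z => t <= z) s.

(* The relation [xi ≺ theta] of [interlace_seq] in a form that does not depend on the order of
   the sequences and is compatible with concatenation. *)
Definition cinterlace x y := forall t,
  [/\ (count_gt x t <= count_gt y t)%N, (count_gt y t <= (count_gt x t).+1)%N,
      (count_ge x t <= count_ge y t)%N & (count_ge y t <= (count_ge x t).+1)%N].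

Definition upward_closed P := forall a b, a <= b -> P a -> P b.

Lemma upward_closed_gt t : upward_closed (fun z => t < z).
Proof. by move=> a b ab /lt_le_trans; apply. Qed.

Lemma upward_closed_ge t : upward_closed (fun z => t <= z).
Proof. by move=> a b ab /le_trans; apply. Qed.

Lemma count_geE s t : count_ge s t = (count_gt s t + count_mem t s)%N.
Proof.
rewrite /count_ge /count_gt -count_predUI.
have -> : count (predI (fun z => t < z) (pred1 t)) s = 0%N.
  by apply/eqP; rewrite -leqn0 leqNgt -has_count; apply/hasPn => z /=; case: ltgtP.
by rewrite addn0; apply: eq_count => z /=; rewrite le_eqVlt eq_sym orbC.
Qed.

Lemma cinterlace_perm x x' y y' :
  perm_eq x x' -> perm_eq y y' -> cinterlace x y -> cinterlace x' y'.
Proof.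
by move=> px py h t; have := h t; rewrite /count_gt /count_ge !(permP px) !(permP py).
Qed.

Lemma cinterlace_catl z x y : cinterlace (z ++ x) (z ++ y) <-> cinterlace x y.
Proof.
by split=> h t; have := h t; rewrite /count_gt /count_ge !count_cat => -[] *; split; lia.
Qed.

Lemma cinterlace_catr z x y : cinterlace (x ++ z) (y ++ z) <-> cinterlace x y.
Proof.
by split=> h t; have := h t; rewrite /count_gt /count_ge !count_cat => -[] *; split; lia.
Qed.

Lemma cinterlace_refl x : cinterlace x x.
Proof. by move=> t; split. Qed.

Lemma cinterlace_count_mem x y c : cinterlace x y ->
  (count_mem c y <= (count_mem c x).+1)%N.
Proof. by case/(_ c) => *; have := count_geE x c; have := count_geE y c; lia. Qed.

Lemma exists_lt_all s : exists t, {in s, forall z, t < z}.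
Proof.
elim: s => [|a s [t ht]]; first by exists 0.
have [mt ma] : Num.min t a <= t /\ Num.min t a <= a by rewrite !ge_min !lexx orbT.
by exists (Num.min t a - 1) => z; rewrite inE => /predU1P [->|/ht]; lra.
Qed.

Lemma cinterlace_size x y : cinterlace x y -> (size x <= size y <= (size x).+1)%N.
Proof.
move=> h; have [t ht] := exists_lt_all (x ++ y).
have all_gt s : {subset s <= x ++ y} -> count_gt s t = size s.
  by move=> sub; apply/eqP; rewrite -all_count; apply/allP => z /sub /ht.
case: (h t); rewrite !all_gt => [*||]; first by apply/andP.
  by move=> z zy; rewrite mem_cat zy orbT.
by move=> z zx; rewrite mem_cat zx.
Qed.

Lemma count_leq_pointwise P u v : upward_closed P -> size u = size v ->
  (forall i, (i < size u)%N -> u`_i <= v`_i) -> (count P u <= count P v)%N.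
Proof.
move=> Pup; elim: u v => [|a u ih] [|b v] //= [sz] le_uv.
have := ih v sz (fun i => le_uv i.+1); have := Pup _ _ (le_uv 0%N isT).
by case: (P a) => [->//|_]; case: (P b) => /=; lia.
Qed.

Lemma count_sorted_lb P s i : upward_closed P -> sorted <=%R s ->
  (i < size s)%N -> P s`_i -> (size s - i <= count P s)%N.
Proof.
move=> Pup ss i_lt Psi; apply: leq_trans (count_drop P s i).
suff : all P (drop i s) by rewrite all_count size_drop => /eqP ->.
apply/(all_nthP 0) => j; rewrite size_drop nth_drop ltn_subRL => j_lt.
apply: Pup Psi.
by apply: (le_sorted_leq_nth 0 ss) => //; rewrite ?inE ?leq_addr.
Qed.

Lemma count_sorted_ub P s i : upward_closed P -> sorted <=%R s ->
  (i < size s)%N -> ~~ P s`_i -> (count P s <= size s - i.+1)%N.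
Proof.
move=> Pup ss i_lt nPsi; have := count_take_drop P s i.+1.
have -> : count P (take i.+1 s) = 0%N.
  apply/eqP; rewrite -leqn0 leqNgt -has_count; apply/(has_nthP 0) => -[j].
  rewrite size_take_min leq_min ltnS => /andP[ji _]; rewrite nth_take ?ltnS //.
  apply/negP; apply: contra nPsi; apply: Pup.
  by apply: (le_sorted_leq_nth 0 ss) => //; rewrite ?inE (leq_ltn_trans ji).
by case/andP.
Qed.

Lemma count_interlace P x y : upward_closed P -> interlace_seq x y ->
  (count P x <= count P y <= (count P x).+1)%N.
Proof.
move=> Pup [[sz le_xy]|[sz le_xy]].
  have le1 : (count P x <= count P (drop 1 y))%N.
    apply: (count_leq_pointwise Pup) => [|i i_lt]; first by rewrite size_drop sz subn1.
    by rewrite nth_drop; case: (le_xy i i_lt).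
  have le2 : (count P (take (size x) y) <= count P x)%N.
    apply: (count_leq_pointwise Pup) => [|i i_lt]; first by rewrite size_take sz ltnSn.
    rewrite size_take sz ltnSn in i_lt.
    by rewrite nth_take //; case: (le_xy i i_lt).
  have := count_drop P y 1; have := count_take_drop P y (size x); rewrite sz subSnn; lia.
case: x sz le_xy => [/size0nil -> //|a x] /= sz le_xy.
have le1 : (count P (a :: x) <= count P y)%N.
  by apply: (count_leq_pointwise Pup) => // i i_lt; case: (le_xy i i_lt).
have le2 : (count P (take (size x) y) <= count P x)%N.
  apply: (count_leq_pointwise Pup) => [|i i_lt]; first by rewrite size_take sz /= ltnSn.
  rewrite size_take sz ltnSn in i_lt.
  by rewrite nth_take //; case: (le_xy i (ltnW _)) => // _; apply.
have := count_take_drop P y (size x); rewrite sz subSnn.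
by move: le1 => /=; case: (P a) => /=; lia.
Qed.

Lemma interlace_cinterlace x y : interlace_seq x y -> cinterlace x y.
Proof.
move=> xy t.
have /andP[? ?] := count_interlace (upward_closed_gt (t := t)) xy.
have /andP[? ?] := count_interlace (upward_closed_ge (t := t)) xy.
by split.
Qed.

Lemma cinterlace_interlace x y : sorted <=%R x -> sorted <=%R y ->
  cinterlace x y -> interlace_seq x y.
Proof.
move=> sx sy xy; have /andP[? ?] := cinterlace_size xy.
have gt_x i : (i < size x)%N -> (count_gt x x`_i <= size x - i.+1)%N.
  by move=> i_lt; apply: (count_sorted_ub (upward_closed_gt (t := x`_i))); rewrite ?ltxx.
have ge_x i : (i < size x)%N -> (size x - i <= count_ge x x`_i)%N.
  by move=> i_lt; apply: (count_sorted_lb (upward_closed_ge (t := x`_i))).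
have [sz|sz] : size y = (size x).+1 \/ size y = size x by lia.
  left; split=> // i i_lt; have i_lty : (i.+1 < size y)%N by rewrite sz.
  split; rewrite leNgt; apply/negP => lt.
    have : (size y - i <= count_gt y x`_i)%N.
      exact: (count_sorted_lb (upward_closed_gt (t := x`_i))) (ltnW i_lty) lt.
    by have := gt_x i i_lt; case: (xy x`_i); lia.
  have : (count_ge y x`_i <= size y - i.+2)%N.
    by apply: (count_sorted_ub (upward_closed_ge (t := x`_i))); rewrite // -ltNge.
  by have := ge_x i i_lt; case: (xy x`_i); lia.
right; split=> // i i_lt; have i_lty : (i < size y)%N by rewrite sz.
split=> [|i1_lt]; rewrite leNgt; apply/negP => lt.
  have : (count_ge y x`_i <= size y - i.+1)%N.
    by apply: (count_sorted_ub (upward_closed_ge (t := x`_i))); rewrite // -ltNge.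
  by have := ge_x i i_lt; case: (xy x`_i); lia.
have : (size y - i <= count_gt y x`_i.+1)%N.
  exact: (count_sorted_lb (upward_closed_gt (t := x`_i.+1))) i_lty lt.
by have := gt_x i.+1 i1_lt; case: (xy x`_i.+1); lia.
Qed.

Lemma count_gt_rcons s c t : count_gt (rcons s c) t = (count_gt s t + (t < c)%R)%N.
Proof. by rewrite /count_gt -cats1 count_cat /= addn0. Qed.

Lemma count_ge_rcons s c t : count_ge (rcons s c) t = (count_ge s t + (t <= c)%R)%N.
Proof. by rewrite /count_ge -cats1 count_cat /= addn0. Qed.

Lemma cinterlace_shift x y :
  all (fun z => z <= 0) x -> all (fun z => z <= 0) y ->
  cinterlace y (rcons x 0) <-> cinterlace x y.
Proof.
move=> /allP x_le0 /allP y_le0.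
have gt0 s t : {in s, forall z, z <= 0} -> 0 <= t -> count_gt s t = 0%N.
  by move=> s_le0 t_ge0; apply/eqP; rewrite -leqn0 leqNgt -has_count;
    apply/hasPn => z /s_le0 z_le0; rewrite -leNgt (le_trans z_le0).
have ge0 s t : {in s, forall z, z <= 0} -> 0 < t -> count_ge s t = 0%N.
  by move=> s_le0 t_gt0; apply/eqP; rewrite -leqn0 leqNgt -has_count;
    apply/hasPn => z /s_le0 z_le0; rewrite -ltNge (le_lt_trans z_le0).
split=> h t; have := h t; rewrite !count_gt_rcons !count_ge_rcons.
all: case: (ltgtP t 0) => [_|t_gt0|->]; [by case=> *; split; lia|
  by rewrite !gt0 ?ge0 ?ltW | by rewrite !gt0 // => -[] *; split; lia].
Qed.

Lemma cinterlace_nonpos x y : cinterlace x y ->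
  all (fun z => z <= 0) y -> all (fun z => z <= 0) x.
Proof.
move=> xy /allP y_le0; apply/allP => z zx; rewrite leNgt; apply/negP => z_gt0.
have : (0 < count_gt x 0)%N by rewrite -has_count; apply/hasP; exists z.
have : count_gt y 0 = 0%N.
  by apply/eqP; rewrite -leqn0 leqNgt -has_count; apply/hasPn => w /y_le0; rewrite leNgt.
by case: (xy 0); lia.
Qed.

Lemma cinterlace_count_gt x y t : cinterlace x y -> t \in y -> t \notin x ->
  count_gt x t = count_gt y t.
Proof.
move=> xy ty tx; have := count_geE x t; have := count_geE y t.
have : count_mem t x = 0%N by apply/count_memPn.
have : (0 < count_mem t y)%N by rewrite -has_count has_pred1.
by case: (xy t); lia.
Qed.

Lemma cinterlace_uniq x1 x2 y : cinterlace x1 y -> cinterlace x2 y ->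
  ~~ has (fun c => (c \in x1) && (c \in x2)) y -> uniq y.
Proof.
move=> x1y x2y /hasPn common; apply: count_mem_uniq => c.
have [cy|/count_memPn //] := boolP (c \in y).
have pos : (0 < count_mem c y)%N by rewrite -has_count has_pred1.
apply/eqP; rewrite eqn_leq pos andbT.
case/nandP: (common c cy) => /count_memPn c_notin.
  by have := cinterlace_count_mem c x1y; rewrite c_notin.
by have := cinterlace_count_mem c x2y; rewrite c_notin.
Qed.

End Interlacing.

Section RealZeros.
Variable R : realType.
Implicit Types (s t : seq R) (P Q F : {poly R}).

Local Notation prodXsubC s := (\prod_(z <- s) ('X - z%:P)).

Lemma sorted_real_zeros P s : real_zeros P s -> sorted <=%R s.
Proof. by case=> _ []. Qed.

Lemma sgn_prodXsubC s x : x \notin s -> 0 < (-1) ^+ count_gt s x * (prodXsubC s).[x].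
Proof.
elim: s => [|a s ih]; first by rewrite big_nil hornerC mulr1 ltr01.
rewrite inE negb_or big_cons hornerM hornerXsubC /count_gt /= => /andP[xa /ih].
rewrite -/(count_gt s x) exprD mulrCA; case: (ltgtP x a) xa => // [xlt|xgt] _ pos.
  by rewrite -mulrA expr1 mulN1r mulrN -mulNr opprB mulr_gt0 ?subr_gt0.
by rewrite expr0 mul1r mulr_gt0 ?subr_gt0.
Qed.

Lemma root_real_zeros P s x : real_zeros P s -> x \in s -> root P x.
Proof.
move=> [_ [_ E]] xs; have : root (prodXsubC s) x by rewrite root_prod_XsubC.
by rewrite E !rootE hornerZ => /eqP ->; rewrite mulr0.
Qed.

Lemma sgn_real_zeros P s x : real_zeros P s -> 0 < lead_coef P -> x \notin s ->
  0 < (-1) ^+ count_gt s x * P.[x].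
Proof. by move=> [_ [_ E]] lc_gt0 xs; rewrite E hornerZ mulrCA mulr_gt0 ?sgn_prodXsubC. Qed.

Lemma size_real_zeros P s : real_zeros P s -> size P = (size s).+1.
Proof.
by move=> [P0 [_ E]]; rewrite E size_scale ?size_prod_XsubC // lead_coef_eq0.
Qed.

Lemma real_zeros_unique P s s' : real_zeros P s -> real_zeros P s' -> s = s'.
Proof.
move=> [P0 [ss E]] [_ [ss' E']]; apply: (sorted_eq le_trans le_anti) => //.
by apply: prod_XsubC_eq; apply: (scalerI (_ : lead_coef P != 0)); rewrite ?lead_coef_eq0 -?E.
Qed.

Lemma real_zerosZ c P s : c != 0 -> real_zeros P s -> real_zeros (c *: P) s.
Proof.
move=> c0 [P0 [ss E]]; split; first by rewrite scaler_eq0 negb_or c0.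
by split=> //; rewrite lead_coefZ -scalerA -E.
Qed.

Lemma real_zeros_mulXsubC c P s : real_zeros P s ->
  real_zeros (('X - c%:P) * P) (sort <=%R (c :: s)).
Proof.
move=> [P0 [_ E]]; split; first by rewrite mulf_neq0 ?polyXsubC_eq0.
split; first exact/sort_sorted/le_total.
rewrite (perm_big _ (permEl (perm_sort _ _))) big_cons lead_coefM lead_coefXsubC mul1r.
by rewrite {1}E scalerAr.
Qed.

Lemma real_zeros_divXsubC c P s : real_zeros P s -> c \in s ->
  exists Q, [/\ real_zeros Q (rem c s), lead_coef Q = lead_coef P & P = ('X - c%:P) * Q].
Proof.
move=> [P0 [ss E]] cs; have lcP : lead_coef P != 0 by rewrite lead_coef_eq0.
have monic_rem : prodXsubC (rem c s) \is monic by apply: monic_prod_XsubC.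
exists (lead_coef P *: prodXsubC (rem c s)).
have lcQ : lead_coef (lead_coef P *: prodXsubC (rem c s)) = lead_coef P.
  by rewrite lead_coefZ (monicP monic_rem) mulr1.
split=> //; last by rewrite {1}E (perm_big _ (perm_to_rem cs)) big_cons scalerAr.
split; first by rewrite -lead_coef_eq0 lcQ.
by rewrite lcQ; split=> //; apply: (subseq_sorted le_trans (rem_subseq c s)).
Qed.

Lemma real_zeros_mulX P s : all (fun z => z <= 0) s -> real_zeros P s ->
  real_zeros ('X * P) (rcons s 0).
Proof.
move=> s_le0 [P0 [ss E]]; split; first by rewrite mulf_neq0 ?polyX_eq0.
split.
  case: s ss s_le0 {E} => // a s ss /allP s_le0 /=.
  by rewrite rcons_path; apply/andP; split; last exact/s_le0/mem_last.
rewrite -cats1 big_cat big_seq1 subr0 lead_coefM lead_coefX mul1r {1}E.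
by rewrite mulrC scalerAl.
Qed.

Lemma count_gt_nth t i : sorted <%R t -> (i < size t)%N ->
  count_gt t t`_i = (size t - i.+1)%N.
Proof.
move=> st it; rewrite -(count_predC (fun z => t`_i < z) t).
have -> : count (predC (fun z => t`_i < z)) t = i.+1.
  by rewrite -(count_le_nth 0 st it); apply: eq_count => z /=; rewrite -leNgt.
by rewrite addnK.
Qed.

Lemma roots_between_sign_changes t F : sorted <%R t ->
  (forall i, (i.+1 < size t)%N -> F.[t`_i] * F.[t`_i.+1] < 0) ->
  exists2 s, size s = (size t).-1 &
    forall i, (i < size s)%N -> t`_i < s`_i < t`_i.+1 /\ root F s`_i.
Proof.
move=> st sgn.
apply: (@exists_seq_nth _ 0 (fun i y => t`_i < y < t`_i.+1 /\ root F y)) => i i_lt.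
have i1_lt : (i.+1 < size t)%N by rewrite -ltn_predRL.
have lt_t : t`_i < t`_i.+1.
  by apply: (sorted_ltn_nth lt_trans) => //; rewrite inE // ltnW.
have [y] := poly_ivtoo (ltW lt_t) (sgn i i1_lt).
by rewrite in_itv /= => y_gap y_root; exists y.
Qed.

Lemma real_zeros_of_gap_roots t s F : sorted <%R t -> size t = (size s).+1 ->
  (forall i, (i < size s)%N -> t`_i < s`_i < t`_i.+1) -> all (root F) s ->
  0 < lead_coef F -> (size F <= (size t).+1)%N -> 0 < (-1) ^+ size s * F.[t`_0] ->
  exists2 eta, real_zeros F eta & cinterlace eta t.
Proof.
move=> st sz gap s_roots lcF szF sgn_t0; have F0 : F != 0 by rewrite -lead_coef_eq0 gt_eqF.
have ss : sorted <%R s.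
  apply/(sortedP 0) => i i1_lt; have /andP[_ lt1] := gap i (ltnW i1_lt).
  by have /andP[/(lt_trans lt1)] := gap i.+1 i1_lt.
have /andP[s_uniq s_le] := lt_sorted_is_uniq_le ss.
have t0_lt_s : {in s, forall z, t`_0 < z}.
  move=> z /(nthP 0)[i i_lt <-]; have /andP[+ _] := gap i i_lt; apply: le_lt_trans.
  by rewrite (lt_sorted_leq_nth 0 st) // inE sz // ltnS ltnW.
have [q Fq] : exists q, F = q * prodXsubC s.
  by apply: uniq_roots_prod_XsubC; rewrite // uniq_rootsE.
have q0 : q != 0 by apply: contraNneq F0; rewrite Fq => ->; rewrite mul0r.
have lcq : lead_coef q = lead_coef F by rewrite Fq lead_coef_Mmonic ?monic_prod_XsubC.
have szFq : size F = (size q + size s)%N.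
  by rewrite Fq size_Mmonic ?monic_prod_XsubC // size_prod_XsubC addnS.
have q_gt0 : (0 < size q)%N by rewrite size_poly_gt0.
have [szq1|szq2] : size q = 1%N \/ size q = 2%N by move: szF; rewrite szFq sz; lia.
  exists s; last by apply: interlace_cinterlace; left; split=> // i /gap/andP[? ?]; rewrite !ltW.
  split=> //; split=> //.
  by rewrite {1}Fq -lcq /lead_coef szq1 -mul_polyC -size1_polyC ?szq1.
set y0 := - q`_0 / lead_coef q.
have qE : q = lead_coef F *: ('X - y0%:P) by rewrite -lcq; apply: size2_polyE.
have y0_lt_t0 : y0 < t`_0.
  have t0_notin : t`_0 \notin s by apply/negP => /t0_lt_s; rewrite ltxx.
  have := sgn_prodXsubC t0_notin; move: sgn_t0.
  have -> : count_gt s t`_0 = size s by apply/eqP; rewrite -all_count; apply/allP.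
  rewrite Fq qE hornerM hornerZ hornerXsubC; set e := (-1) ^+ _; set p := _.[_].
  move=> posF posp; rewrite -subr_gt0 -(pmulr_rgt0 _ lcF) -(pmulr_lgt0 _ posp).
  by rewrite (_ : _ * (e * p) = e * (lead_coef F * (t`_0 - y0) * p)) //; ring.
exists (y0 :: s).
  split=> //; split; last by rewrite big_cons {1}Fq qE scalerAl.
  rewrite /= (path_sortedE le_trans) s_le andbT.
  by apply/allP => z /t0_lt_s/(lt_trans y0_lt_t0)/ltW.
apply: interlace_cinterlace; right; split=> [|i]; rewrite /= ?sz // ltnS => i_le.
split=> [|i1_lt]; last by have /andP[? _] := gap i i1_lt; apply: ltW.
by case: i i_le => [_|i i_lt]; [apply: ltW | have /andP[_ ?] := gap i i_lt; apply: ltW].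
Qed.

Lemma real_zeros_of_sign_changes t F : sorted <%R t -> 0 < lead_coef F ->
  (size t <= size F <= (size t).+1)%N ->
  {in t, forall x, 0 < (-1) ^+ count_gt t x * F.[x]} ->
  exists2 eta, real_zeros F eta & cinterlace eta t.
Proof.
move=> st lcF /andP[szF_ge szF_le] sgn; have F0 : F != 0 by rewrite -lead_coef_eq0 gt_eqF.
case: t st szF_ge szF_le sgn => [|t0 t'] st szF_ge szF_le sgn.
  have sz1 : size F = 1%N by apply/anti_leq; rewrite size_poly_gt0 F0 andbT.
  exists [::]; last exact: cinterlace_refl.
  split=> //; split=> //; rewrite big_nil alg_polyC /lead_coef sz1.
  exact: size1_polyC (eq_leq sz1).
set t := t0 :: t' in st szF_ge szF_le sgn *.
have sgn_nth i : (i < size t)%N -> 0 < (-1) ^+ (size t - i.+1) * F.[t`_i].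
  by move=> it; rewrite -count_gt_nth // sgn ?mem_nth.
have sign_flip i : (i.+1 < size t)%N -> F.[t`_i] * F.[t`_i.+1] < 0.
  move=> i1_lt; have := sgn_nth i (ltnW i1_lt); have := sgn_nth i.+1 i1_lt.
  rewrite -(subnSK i1_lt) exprS; set e := (-1) ^+ _ => pos1 pos0.
  have ee : e * e = 1 by rewrite -exprMn mulrNN mulr1 expr1n.
  nra.
have [s sz s_gap] := roots_between_sign_changes st sign_flip.
apply: (real_zeros_of_gap_roots (s := s) st) => //.
- by rewrite sz.
- by move=> i /s_gap[].
- by apply/(all_nthP 0) => i /s_gap[].
by have := sgn_nth 0%N isT; rewrite subn1 -sz.
Qed.

End RealZeros.

Section Combination.
Variable R : realType.
Implicit Types (t : seq R) (P : {poly R}).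

Lemma real_zeros_combination_strict t xi1 xi2 P1 P2 l r :
  sorted <=%R t -> 0 < l -> 0 < r ->
  real_zeros P1 xi1 -> real_zeros P2 xi2 -> 0 < lead_coef P1 -> 0 < lead_coef P2 ->
  cinterlace xi1 t -> cinterlace xi2 t -> ~~ has (fun c => (c \in xi1) && (c \in xi2)) t ->
  exists2 xi, real_zeros (l *: P1 + r *: P2) xi & cinterlace xi t.
Proof.
move=> st l_gt0 r_gt0 rz1 rz2 lc1 lc2 i1 i2 no_common.
have st_lt : sorted <%R t by rewrite lt_sorted_uniq_le st (cinterlace_uniq i1 i2 no_common).
have lcZ1 : 0 < lead_coef (l *: P1) by rewrite lead_coefZ mulr_gt0.
have lcZ2 : 0 < lead_coef (r *: P2) by rewrite lead_coefZ mulr_gt0.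
have [lc sz] := lead_coefD_gt0 lcZ1 lcZ2.
apply: real_zeros_of_sign_changes => //.
  rewrite sz !size_scale ?gt_eqF // (size_real_zeros rz1) (size_real_zeros rz2).
  by have := cinterlace_size i1; have := cinterlace_size i2; lia.
move=> x xt.
have sgn_pos P xi : real_zeros P xi -> 0 < lead_coef P -> cinterlace xi t -> x \notin xi ->
    0 < (-1) ^+ count_gt t x * P.[x].
  by move=> rz lcP ixi xxi; rewrite -(cinterlace_count_gt ixi xt xxi) sgn_real_zeros.
have sgn_nneg P xi : real_zeros P xi -> 0 < lead_coef P -> cinterlace xi t ->
    0 <= (-1) ^+ count_gt t x * P.[x].
  move=> rz lcP ixi; have [xxi|xxi] := boolP (x \in xi); last by rewrite ltW ?(sgn_pos _ xi).
  by rewrite (rootP (root_real_zeros rz xxi)) mulr0.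
have nneg1 := sgn_nneg _ _ rz1 lc1 i1; have nneg2 := sgn_nneg _ _ rz2 lc2 i2.
rewrite hornerD !hornerZ mulrDr (mulrCA _ l) (mulrCA _ r).
case/nandP: (hasPn no_common x xt) => [/(sgn_pos _ _ rz1 lc1 i1)|/(sgn_pos _ _ rz2 lc2 i2)] pos.
  by apply: ltr_wpDr; rewrite (mulr_ge0, mulr_gt0) // ltW.
by apply: ltr_pwDr; rewrite (mulr_ge0, mulr_gt0) // ltW.
Qed.

Lemma real_zeros_combination t xi1 xi2 P1 P2 l r :
  sorted <=%R t -> 0 < l -> 0 < r ->
  real_zeros P1 xi1 -> real_zeros P2 xi2 -> 0 < lead_coef P1 -> 0 < lead_coef P2 ->
  cinterlace xi1 t -> cinterlace xi2 t ->
  exists2 xi, real_zeros (l *: P1 + r *: P2) xi & cinterlace xi t.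
Proof.
move=> + l_gt0 r_gt0; have [n] := ubnP (size t).
elim: n => // n IH in t xi1 xi2 P1 P2 *; rewrite ltnS => sz st rz1 rz2 lc1 lc2 i1 i2.
have [/hasP[c ct /andP[c1 c2]]|no_common] := boolP (has (fun c => (c \in xi1) && (c \in xi2)) t);
  last exact: real_zeros_combination_strict st l_gt0 r_gt0 rz1 rz2 lc1 lc2 i1 i2 no_common.
have [Q1 [rzQ1 lcQ1 ->]] := real_zeros_divXsubC rz1 c1.
have [Q2 [rzQ2 lcQ2 ->]] := real_zeros_divXsubC rz2 c2.
have rem_c xi : c \in xi -> cinterlace xi t -> cinterlace (rem c xi) (rem c t).
  move=> cxi ixi; apply/(cinterlace_catl [:: c]).
  exact: cinterlace_perm (perm_to_rem cxi) (perm_to_rem ct) ixi.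
have rem_sz : (size (rem c t) < n)%N.
  by rewrite size_rem // (leq_trans _ sz) // ltn_predL; case: (t) ct.
have rem_sorted : sorted <=%R (rem c t) := subseq_sorted le_trans (rem_subseq c t) st.
rewrite -lcQ1 in lc1; rewrite -lcQ2 in lc2.
have [xi rz ixi] :=
  IH _ _ _ _ _ rem_sz rem_sorted rzQ1 rzQ2 lc1 lc2 (rem_c _ c1 i1) (rem_c _ c2 i2).
exists (sort <=%R (c :: xi)); first by rewrite !scalerAr -mulrDr; apply: real_zeros_mulXsubC.
have := (cinterlace_catl [:: c] xi (rem c t)).2 ixi.
by apply: cinterlace_perm; rewrite perm_sym ?perm_sort ?perm_to_rem.
Qed.

End Combination.

Section InterpolatorySquare.
Variable R : realType.
Implicit Types (s xi th : seq R) (P A B : {poly R}).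

Definition nonpos_real_zeros P s :=
  [/\ real_zeros P s, 0 < lead_coef P & all (fun z => z <= 0) s].

Lemma exists_nonpos_real_zeros P : standard P -> only_nonpos_zeros P -> P != 0 ->
  exists s, nonpos_real_zeros P s.
Proof.
move=> [->|lcP]; first by rewrite eqxx.
by move=> [->|[s [rzP s_le0]]]; rewrite ?eqxx // => _; exists s.
Qed.

Lemma nonpos_real_zerosZ c P s : 0 < c -> nonpos_real_zeros P s -> nonpos_real_zeros (c *: P) s.
Proof.
move=> c_gt0 [rzP lcP s_le0]; split=> //; first exact: real_zerosZ (lt0r_neq0 c_gt0) rzP.
by rewrite lead_coefZ mulr_gt0.
Qed.

Lemma nonpos_real_zeros_mulX P s :
  nonpos_real_zeros P s -> nonpos_real_zeros ('X * P) (rcons s 0).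
Proof.
move=> [rzP lcP s_le0]; split; first exact: real_zeros_mulX.
  by rewrite mulrC lead_coefMX.
by rewrite all_rcons lexx.
Qed.

Lemma prec_cinterlace A B xi th : real_zeros A xi -> real_zeros B th ->
  prec A B -> cinterlace xi th.
Proof.
move=> rzA rzB [A0|[B0|[xi' [th' [rzA' [rzB' ixt]]]]]].
- by case: rzA; rewrite A0 eqxx.
- by case: rzB; rewrite B0 eqxx.
by rewrite (real_zeros_unique rzA rzA') (real_zeros_unique rzB rzB'); apply: interlace_cinterlace.
Qed.

Lemma interp_cube1_zeros P Q p q : nonpos_real_zeros P p -> nonpos_real_zeros Q q ->
  cinterlace p q -> interp_cube1 P Q.
Proof.
move=> [rzP lcP p_le0] [rzQ lcQ q_le0] ipq.
split; [by right | split; [by right | split; [by right; exists p | split]]].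
  by right; exists q.
right; right; exists p, q; split=> //; split=> //.
by apply: cinterlace_interlace => //; apply: sorted_real_zeros; eassumption.
Qed.

Lemma interp_square_zeros A B xi th :
  nonpos_real_zeros A xi -> nonpos_real_zeros B th -> cinterlace xi th ->
  interp_square A B B ('X * A).
Proof.
move=> nrzA nrzB iAB l r l_gt0 r_gt0.
have [[rzA lcA xi_le0] [rzB lcB th_le0]] := (nrzA, nrzB).
have [rzXA lcXA _] := nonpos_real_zeros_mulX nrzA.
have [zeta rzC iCB] := real_zeros_combination (sorted_real_zeros rzB) l_gt0 r_gt0
  rzA rzB lcA lcB iAB (cinterlace_refl th).
have zeta_le0 := cinterlace_nonpos iCB th_le0.
have [zeta' rzC' iCXA] := real_zeros_combination (sorted_real_zeros rzXA) l_gt0 r_gt0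
  rzA rzB lcA lcB ((cinterlace_shift xi_le0 xi_le0).2 (cinterlace_refl xi))
  ((cinterlace_shift xi_le0 th_le0).2 iAB).
rewrite -(real_zeros_unique rzC rzC') in iCXA.
have iAC := (cinterlace_shift xi_le0 zeta_le0).1 iCXA.
have nrzC : nonpos_real_zeros (l *: A + r *: B) zeta.
  by split=> //; apply: (proj1 (lead_coefD_gt0 _ _)); rewrite lead_coefZ mulr_gt0.
have [rzXC lcXC zeta0_le0] := nonpos_real_zeros_mulX nrzC.
have iXAXC : cinterlace (rcons xi 0) (rcons zeta 0).
  by rewrite -!cats1; apply/cinterlace_catr.
have [omega rzD iDXC] := real_zeros_combination (sorted_real_zeros rzXC) l_gt0 r_gt0
  rzB rzXA lcB lcXA ((cinterlace_shift zeta_le0 th_le0).2 iCB) iXAXC.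
have nrzD : nonpos_real_zeros (l *: B + r *: ('X * A)) omega.
  split=> //; last exact: cinterlace_nonpos iDXC zeta0_le0.
  by apply: (proj1 (lead_coefD_gt0 _ _)); rewrite lead_coefZ mulr_gt0.
have -> : l *: ('X * A) + r *: ('X * B) = 'X * (l *: A + r *: B).
  by rewrite mulrDr !scalerAr.
split; last exact: interp_cube1_zeros nrzD (nonpos_real_zeros_mulX nrzC) iDXC.
apply: (interp_cube1_zeros nrzC nrzD).
by case: nrzD => _ _ /(cinterlace_shift zeta_le0) <-.
Qed.

Lemma interp_square_zeroA B th : nonpos_real_zeros B th -> interp_square 0 B B ('X * 0).
Proof.
move=> nrzB l r l_gt0 r_gt0; rewrite !(mulr0, scaler0, add0r, addr0).
have [_ _ th_le0] := nrzB; have nrzXB := nonpos_real_zeros_mulX nrzB.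
have nrz_lB := nonpos_real_zerosZ l_gt0 nrzB.
split.
  exact: interp_cube1_zeros (nonpos_real_zerosZ r_gt0 nrzB) nrz_lB (cinterlace_refl th).
apply: interp_cube1_zeros nrz_lB (nonpos_real_zerosZ r_gt0 nrzXB) _.
exact/(cinterlace_shift th_le0 th_le0)/cinterlace_refl.
Qed.

Lemma interp_square_zeroB A xi : nonpos_real_zeros A xi -> interp_square A 0 0 ('X * A).
Proof.
move=> nrzA l r l_gt0 r_gt0; rewrite !(mulr0, scaler0, add0r, addr0).
have [_ _ xi_le0] := nrzA; have nrzXA := nonpos_real_zeros_mulX nrzA.
have nrz_rXA := nonpos_real_zerosZ r_gt0 nrzXA.
split; last first.
  exact: interp_cube1_zeros nrz_rXA (nonpos_real_zerosZ l_gt0 nrzXA) (cinterlace_refl _).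
apply: interp_cube1_zeros (nonpos_real_zerosZ l_gt0 nrzA) nrz_rXA _.
exact/(cinterlace_shift xi_le0 xi_le0)/cinterlace_refl.
Qed.

End InterpolatorySquare.

Theorem lemma4p4 (R : realType) (A B : {poly R}) :
  interp_cube1 A B -> interp_square A B B ('X * A).
Proof.
move=> [stdA [stdB [nzA [nzB precAB]]]].
have [->|A0] := eqVneq A 0; have [->|B0] := eqVneq B 0.
- by move=> l r _ _; rewrite !(mulr0, scaler0, addr0); split; do 4?split; left.
- by have [th nrzB] := exists_nonpos_real_zeros stdB nzB B0; apply: interp_square_zeroA nrzB.
- by have [xi nrzA] := exists_nonpos_real_zeros stdA nzA A0; apply: interp_square_zeroB nrzA.
have [xi nrzA] := exists_nonpos_real_zeros stdA nzA A0.
have [th nrzB] := exists_nonpos_real_zeros stdB nzB B0.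
apply: (interp_square_zeros nrzA nrzB).
by case: nrzA nrzB => rzA _ _ [rzB _ _]; apply: prec_cinterlace rzA rzB precAB.
Qed.
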